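(* Let $\mathcal{H}_\mathrm{S}\cong\mathbb{C}^d$ be a finite-dimensional quantum system and let $\mathcal{E}_1,\mathcal{E}_2$ be completely positive trace-preserving (CPT) maps on the operators on $\mathcal{H}_\mathrm{S}$. Let $\chi_1=\chi[\mathcal{E}_1]$ and $\chi_2=\chi[\mathcal{E}_2]$ be their Choi states, and let $E$ be an entanglement measure and $E^\sharp$ the corresponding entanglement of assistance (as defined in the context). If $$E^\sharp[\chi_1] < E[\chi_2],$$ then the dynamics $\mathcal{D}=(\mathcal{E}_1,\mathcal{E}_2)$ requires truly quantum memory; that is, there exist no Kraus decomposition $\{M_i\}$ of $\mathcal{E}_1$ (i.e. $\mathcal{E}_1[\rho]=\sum_i M_i\rho M_i^\dagger$ for all $\rho$) and CPT maps $\Phi_i$ on the operators on $\mathcal{H}_\mathrm{S}$ such that $\mathcal{E}_2[\rho]=\sum_i \Phi_i[M_i\rho M_i^\dagger]$ for all $\rho$.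
   Context: Choi state: let $\mathcal{H}_\mathrm{A}\cong\mathbb{C}^d$ be an ancilla, $\{\ket{j_\mathrm{S}}\}$, $\{\ket{j_\mathrm{A}}\}$ orthonormal bases, and $\ket{\phi^+}=\frac{1}{\sqrt d}\sum_{j=0}^{d-1}\ket{j_\mathrm{S}}\ket{j_\mathrm{A}}$. For a CPT map $\mathcal{E}$ on $\mathrm{S}$, its Choi state is $\chi[\mathcal{E}]=(\mathcal{E}\otimes\mathbb{1})(\ket{\phi^+}\bra{\phi^+})$, a state on $\mathcal{H}_\mathrm{S}\otimes\mathcal{H}_\mathrm{A}$. Entanglement measure: $E$ is an entanglement monotone on bipartite states of $\mathrm{S}\mathrm{A}$ (e.g. entanglement of formation or concurrence) whose value on a mixed state is the convex roof of its pure-state values, $E[\rho]=\min_{\{p_k,\ket{\varphi_k}\}}\sum_k p_kE[\ket{\varphi_k}]$ over all pure-state decompositions $\rho=\sum_k p_k\ket{\varphi_k}\bra{\varphi_k}$, and which does not increase under local CPT maps acting on $\mathrm{S}$. Entanglement of assistance: $E^\sharp[\chi]=\max_{\{p_k,\ket{\psi_k}\}}\sum_k p_kE[\ket{\psi_k}]$, the maximum over all pure-state decompositions $\chi=\sum_kp_k\ket{\psi_k}\bra{\psi_k}$. A dynamics $(\mathcal{E}_1,\mathcal{E}_2)$ is said to be realizable with classical memory iff there exist a Kraus decomposition $\{M_i\}$ of $\mathcal{E}_1$ and CPT maps $\Phi_i$ with $\mathcal{E}_2[\rho]=\sum_i\Phi_i[M_i\rho M_i^\dagger]$; otherwise it requires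 truly quantum memory. *)

From mathcomp Require Import all_boot all_algebra.
From mathcomp Require Import classical_sets reals constructive_ereal ereal.
From mathcomp.real_closed Require Import complex mxtens.

Set Implicit Arguments.
Unset Strict Implicit.
Unset Printing Implicit Defensive.

Import GRing.Theory Num.Theory.
Local Open Scope ring_scope.
Local Open Scope complex_scope.

Section Quantum.
Variable R : realType.
Local Notation C := (R[i]).

Definition dag m n (A : 'M[C]_(m, n)) : 'M[C]_(n, m) := (map_mx (fun x => x^*) A)^T.

Definition psd n (A : 'M[C]_n) : Prop :=
  forall v : 'cV[C]_n, 0 <= (dag v *m A *m v) 0 0.

Definition density n (A : 'M[C]_n) : Prop := psd A /\ \tr A = 1.

(* block (a,b) of an operator on C^d (x) C^n w.r.t. the second factor *)
Definition blk d n (a b : 'I_n) (X : 'M[C]_(d * n)) : 'M[C]_d :=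
  \matrix_(i, j) X (mxtens_index (i, a)) (mxtens_index (j, b)).

(* (L (x) id_n) : the map L acting on the first tensor factor *)
Definition ampl d n (L : 'M[C]_d -> 'M[C]_d) (X : 'M[C]_(d * n)) : 'M[C]_(d * n) :=
  \sum_(a < n) \sum_(b < n) (L (blk a b X) *t (delta_mx a b : 'M[C]_n)).

Definition linear_map d (L : 'M[C]_d -> 'M[C]_d) : Prop :=
  forall (c : C) (A B : 'M[C]_d), L (c *: A + B) = c *: L A + L B.

Definition completely_positive d (L : 'M[C]_d -> 'M[C]_d) : Prop :=
  forall (n : nat) (X : 'M[C]_(d * n)), psd X -> psd (ampl L X).

Definition trace_preserving d (L : 'M[C]_d -> 'M[C]_d) : Prop :=
  forall A : 'M[C]_d, \tr (L A) = \tr A.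

Definition CPT d (L : 'M[C]_d -> 'M[C]_d) : Prop :=
  [/\ linear_map L, completely_positive L & trace_preserving L].

Definition phiplus d : 'cV[C]_(d * d) :=
  ((Num.sqrt (d%:R : R))^-1)%:C *:
    \sum_(j < d) ((delta_mx j 0 : 'cV[C]_d) *t (delta_mx j 0 : 'cV[C]_d)).

Definition proj n (psi : 'cV[C]_n) : 'M[C]_n := psi *m dag psi.

Definition choi d (L : 'M[C]_d -> 'M[C]_d) : 'M[C]_(d * d) :=
  ampl L (proj (phiplus d)).

Definition pure_decomp N (rho : 'M[C]_N) n (p : 'I_n -> R) (psi : 'I_n -> 'cV[C]_N) : Prop :=
  [/\ forall k, 0 <= p k, \sum_(k < n) p k = 1,
      forall k, dag (psi k) *m psi k = 1
    & rho = \sum_(k < n) (p k)%:C *: proj (psi k)].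

Definition decomp_value N (E : 'M[C]_N -> R) n (p : 'I_n -> R) (psi : 'I_n -> 'cV[C]_N) : R :=
  \sum_(k < n) p k * E (proj (psi k)).

Definition convex_roof N (E : 'M[C]_N -> R) : Prop :=
  forall rho : 'M[C]_N, density rho ->
    (forall n p psi, @pure_decomp N rho n p psi -> E rho <= decomp_value E p psi) /\
    (exists n p psi, @pure_decomp N rho n p psi /\ E rho = decomp_value E p psi).

Definition local_monotone d (E : 'M[C]_(d * d) -> R) : Prop :=
  forall L : 'M[C]_d -> 'M[C]_d, CPT L ->
    forall rho : 'M[C]_(d * d), density rho -> E (ampl L rho) <= E rho.

(* entanglement of assistance: max (here: supremum, in extended reals) over
   pure-state decompositions *)
Definition Esharp N (E : 'M[C]_N -> R) (chi : 'M[C]_N) : \bar R :=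
  ereal_sup [set x : \bar R | exists n p psi,
     @pure_decomp N chi n p psi /\ x = (decomp_value E p psi)%:E].

Definition kraus d (L : 'M[C]_d -> 'M[C]_d) n (M : 'I_n -> 'M[C]_d) : Prop :=
  forall rho : 'M[C]_d, density rho -> L rho = \sum_(i < n) M i *m rho *m dag (M i).

Definition classical_memory d (E1 E2 : 'M[C]_d -> 'M[C]_d) : Prop :=
  exists n (M : 'I_n -> 'M[C]_d) (Phi : 'I_n -> 'M[C]_d -> 'M[C]_d),
    [/\ kraus E1 M, forall i, CPT (Phi i)
      & forall rho : 'M[C]_d, density rho ->
          E2 rho = \sum_(i < n) Phi i (M i *m rho *m dag (M i))].

End Quantum.

(* If E2 = Σ_i Φ_i(M_i · M_i^†) for a Kraus decomposition {M_i} of E1, the vectors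
   w_i = (M_i ⊗ 1)|φ+⟩ satisfy χ[E1] = Σ_i |w_i⟩⟨w_i| and
   χ[E2] = Σ_i (Φ_i ⊗ 1)(|w_i⟩⟨w_i|).  Writing w_i = √p_i ψ_i with ψ_i normalised,
   the first identity is a pure-state decomposition of χ[E1] and the second exhibits
   χ[E2] as the mixture Σ_i p_i (Φ_i ⊗ 1)(|ψ_i⟩⟨ψ_i|).  A convex roof is convex and E
   does not increase under the local maps Φ_i, hence
   E[χ[E2]] ≤ Σ_i p_i E[ψ_i] ≤ E♯[χ[E1]].
   The Kraus and memory identities are only assumed on states; they extend to all
   operators by linearity, because states span all operators (polarisation). *)

From mathcomp Require Import all_boot all_algebra.
From mathcomp Require Import classical_sets reals constructive_ereal ereal.
From mathcomp.real_closed Require Import complex mxtens.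
From mathcomp Require Import ring.
From mathcomp Require Import order.
Import Order.TTheory GRing.Theory Num.Theory.

Set Implicit Arguments.
Unset Strict Implicit.
Unset Printing Implicit Defensive.

Local Open Scope ring_scope.
Local Open Scope complex_scope.

Section Quantum.
Variable R : realType.
Local Notation C := R[i].

Lemma conjcM_ge0 (x : C) : 0 <= conjc x * x.
Proof. by rewrite mulrC mulcJ_ge0. Qed.

Lemma ge0_ReK (x : C) : 0 <= x -> (complex.Re x)%:C = x.
Proof.
case: x => a b; rewrite lecE /= => /andP[/eqP b0 _].
by apply/eqP; rewrite eq_complex /= b0 !eqxx.
Qed.

Lemma Re_ge0 (x : C) : 0 <= x -> 0 <= complex.Re x.
Proof. by case: x => a b; rewrite lecE => /andP[]. Qed.

Lemma conjcR (x : R) : conjc x%:C = x%:C :> C.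
Proof. by apply/eqP; rewrite eq_complex /= oppr0 !eqxx. Qed.

Lemma dagE m n (A : 'M[C]_(m, n)) i j : dag A i j = conjc (A j i).
Proof. by rewrite !mxE. Qed.

Lemma dagZ m n c (A : 'M[C]_(m, n)) : dag (c *: A) = conjc c *: dag A.
Proof. by apply/matrixP=> i j; rewrite !mxE rmorphM. Qed.

Lemma dagM m n p (A : 'M[C]_(m, n)) (B : 'M[C]_(n, p)) :
  dag (A *m B) = dag B *m dag A.
Proof.
apply/matrixP=> i j; rewrite !mxE rmorph_sum; apply: eq_bigr=> k _.
by rewrite !mxE rmorphM mulrC.
Qed.

Lemma dagK m n (A : 'M[C]_(m, n)) : dag (dag A) = A.
Proof. by apply/matrixP=> i j; rewrite !mxE conjcK. Qed.

Lemma dag_tens m n p q (A : 'M[C]_(m, n)) (B : 'M[C]_(p, q)) :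
  dag (A *t B) = dag A *t dag B.
Proof. by rewrite /dag map_mxT trmx_tens. Qed.

Lemma dag1 n : dag (1%:M : 'M[C]_n) = 1%:M.
Proof. by apply/matrixP=> i j; rewrite !mxE conjc_nat eq_sym. Qed.

Lemma dag_delta n (a : 'I_n) : dag (delta_mx a 0 : 'cV[C]_n) = delta_mx 0 a.
Proof. by apply/matrixP=> i j; rewrite !mxE conjc_nat andbC. Qed.

Definition sqnorm n (v : 'cV[C]_n) : C := (dag v *m v) 0 0.

Lemma sqnormE n (v : 'cV[C]_n) : sqnorm v = \sum_k conjc (v k 0) * v k 0.
Proof. by rewrite /sqnorm mxE; apply: eq_bigr => k _; rewrite !mxE. Qed.

Lemma sqnorm_ge0 n (v : 'cV[C]_n) : 0 <= sqnorm v.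
Proof. by rewrite sqnormE sumr_ge0 // => k _; apply: conjcM_ge0. Qed.

Lemma sqnorm_eq0 n (v : 'cV[C]_n) : (sqnorm v == 0) = (v == 0).
Proof.
apply/idP/eqP=> [|->]; last by rewrite /sqnorm mulmx0 mxE.
rewrite sqnormE psumr_eq0 => [/allP v0|k _]; last exact: conjcM_ge0.
apply/matrixP=> k z; rewrite ord1 mxE; apply/eqP.
by have := v0 k (mem_index_enum _); rewrite mulf_eq0 conjc_eq0 orbb.
Qed.

Lemma mxtrace_proj n (v : 'cV[C]_n) : \tr (proj v) = sqnorm v.
Proof. by rewrite /proj mxtrace_mulC /mxtrace big_ord1. Qed.

Lemma psd_scale_proj n c (v : 'cV[C]_n) : 0 <= c -> psd (c *: proj v).
Proof.
move=> c_ge0 u; rewrite /proj -scalemxAr -scalemxAl mxE !mulmxA -(mulmxA (dag u *m v)).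
have -> : dag v *m u = dag (dag u *m v) by rewrite dagM dagK.
set x := dag u *m v.
by rewrite [X in c * X]mxE big_ord1 dagE mulr_ge0 ?mulcJ_ge0.
Qed.

Lemma density_proj n (v : 'cV[C]_n) : dag v *m v = 1 -> density (proj v).
Proof.
move=> v_unit; split; first by rewrite -[proj v]scale1r; apply: psd_scale_proj.
by rewrite mxtrace_proj /sqnorm v_unit mxE.
Qed.

Lemma psd_sum N m (c : 'I_m -> C) (S : 'I_m -> 'M[C]_N) :
  (forall i, 0 <= c i) -> (forall i, psd (S i)) -> psd (\sum_i c i *: S i).
Proof.
move=> c_ge0 S_psd u; rewrite mulmx_sumr mulmx_suml summxE sumr_ge0 // => i _.
by rewrite -scalemxAr -scalemxAl mxE; exact: mulr_ge0 (c_ge0 i) (S_psd i u).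
Qed.

Lemma density_mix N m (p : 'I_m -> R) (S : 'I_m -> 'M[C]_N) :
  (forall i, 0 <= p i) -> \sum_i p i = 1 -> (forall i, density (S i)) ->
  density (\sum_i (p i)%:C *: S i).
Proof.
move=> p_ge0 p_sum1 S_dens; split.
  by apply: psd_sum => i; [rewrite ler0c | case: (S_dens i)].
rewrite raddf_sum /=.
under eq_bigr => i _ do rewrite mxtraceZ (proj2 (S_dens i)) mulr1.
by rewrite -rmorph_sum p_sum1.
Qed.

Lemma sum_mxtens_index (V : nmodType) m n (F : 'I_(m * n) -> V) :
  \sum_r F r = \sum_(i < m) \sum_(j < n) F (mxtens_index (i, j)).
Proof.
rewrite pair_bigA /= (reindex (@mxtens_index m n)) /=; last first.
  by exists (@mxtens_unindex m n) => x _; rewrite (mxtens_indexK, mxtens_unindexK).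
by apply: eq_bigr => -[i j].
Qed.

Section Blocks.
Variables d n : nat.
Implicit Types X Y : 'M[C]_(d * n).

Lemma blkD a b X Y : blk a b (X + Y) = blk a b X + blk a b Y.
Proof. by apply/matrixP=> i j; rewrite !mxE. Qed.

Lemma blk0 a b : blk a b (0 : 'M[C]_(d * n)) = 0.
Proof. by apply/matrixP=> i j; rewrite !mxE. Qed.

Lemma blkZ a b c X : blk a b (c *: X) = c *: blk a b X.
Proof. by apply/matrixP=> i j; rewrite !mxE. Qed.

Lemma blk_sum a b m (F : 'I_m -> 'M[C]_(d * n)) :
  blk a b (\sum_(k < m) F k) = \sum_(k < m) blk a b (F k).
Proof. exact: (big_morph _ (blkD a b) (blk0 a b)). Qed.

Lemma blk_tens_delta a b a' b' (A : 'M[C]_d) :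
  blk a b (A *t (delta_mx a' b' : 'M[C]_n)) = ((a' == a) && (b' == b))%:R *: A.
Proof.
apply/matrixP=> i j; rewrite !mxE !mxtens_indexK /= mulrC.
by rewrite [a == a']eq_sym [b == b']eq_sym.
Qed.

Lemma blk_ampl (L : 'M[C]_d -> 'M[C]_d) a b X : blk a b (ampl L X) = L (blk a b X).
Proof.
rewrite /ampl blk_sum (bigD1 a) //= [X in _ + X]big1 ?addr0; last first.
  move=> a' /negPf a'a; rewrite blk_sum big1 // => b' _.
  by rewrite blk_tens_delta a'a scale0r.
rewrite blk_sum (bigD1 b) //= [X in _ + X]big1 ?addr0; last first.
  by move=> b' /negPf b'b; rewrite blk_tens_delta b'b andbF scale0r.
by rewrite blk_tens_delta !eqxx scale1r.
Qed.

Lemma blkP X Y : (forall a b, blk a b X = blk a b Y) <-> X = Y.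
Proof.
split=> [XY|-> //]; apply/matrixP=> r s.
case: (mxtens_indexP r) => i a; case: (mxtens_indexP s) => j b.
by move: (XY a b) => /matrixP/(_ i j); rewrite !mxE.
Qed.

Lemma mxtrace_blk X : \tr X = \sum_a \tr (blk a a X).
Proof.
rewrite /mxtrace sum_mxtens_index exchange_big; apply: eq_bigr => a _.
by apply: eq_bigr => i _; rewrite mxE.
Qed.

Lemma blk_tens1_mull a b (A : 'M[C]_d) X :
  blk a b ((A *t (1%:M : 'M_n)) *m X) = A *m blk a b X.
Proof.
apply/matrixP=> i j; rewrite !mxE sum_mxtens_index; apply: eq_bigr => k _.
rewrite (bigD1 a) //= big1 ?addr0 => [|a' a'a]; rewrite tensmxE !mxE.
  by rewrite eqxx mulr1.
by rewrite eq_sym (negPf a'a) mulr0 mul0r.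
Qed.

Lemma blk_mulmx_tens1 a b (A : 'M[C]_d) X :
  blk a b (X *m (A *t (1%:M : 'M_n))) = blk a b X *m A.
Proof.
apply/matrixP=> i j; rewrite !mxE sum_mxtens_index; apply: eq_bigr => k _.
rewrite (bigD1 b) //= big1 ?addr0 => [|b' b'b]; rewrite tensmxE !mxE.
  by rewrite eqxx mulr1.
by rewrite (negPf b'b) mulr0 mulr0.
Qed.

End Blocks.

Lemma proj_polarization n (u v : 'cV[C]_n) :
  2%:R *: (u *m dag v) = (proj (u + v) - proj u - proj v)
     + 'i *: (proj (u + 'i *: v) - proj u - proj v).
Proof.
have conj_i : 0 -i* 1 = - 'i :> C by apply/eqP; rewrite eq_complex /= oppr0 !eqxx.
apply/matrixP=> a b; rewrite !mxE !big_ord1 !mxE !rmorphD !rmorphM /= conj_i.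
set x := u a 0; set y := v a 0; set x' := conjc (u b 0); set y' := conjc (v b 0).
have -> : (x + y) * (x' + y') - x * x' - y * y'
    + 'i * ((x + 'i * y) * (x' + - 'i * y') - x * x' - y * y')
  = 2%:R * (x * y') + ('i ^+ 2 + 1) * (y * x' - x * y' - 'i * y * y') by ring.
by rewrite sqr_i addNr mul0r addr0.
Qed.

Section LinearMaps.
Variable d : nat.
Implicit Types (L K : 'M[C]_d -> 'M[C]_d) (A B : 'M[C]_d).

Lemma linear_map0 L : linear_map L -> L 0 = 0.
Proof.
move=> L_lin; apply: (addrI (L 0)).
by rewrite addr0 -{1}(scale1r (L 0)) -L_lin scale1r addr0.
Qed.

Lemma linear_mapD L : linear_map L -> forall A B, L (A + B) = L A + L B.
Proof. by move=> L_lin A B; have := L_lin 1 A B; rewrite !scale1r. Qed.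

Lemma linear_mapZ L : linear_map L -> forall c A, L (c *: A) = c *: L A.
Proof.
by move=> L_lin c A; rewrite -[c *: A]addr0 L_lin linear_map0 // addr0.
Qed.

Lemma linear_mapN L : linear_map L -> forall A, L (- A) = - L A.
Proof. by move=> L_lin A; rewrite -scaleN1r linear_mapZ // scaleN1r. Qed.

Lemma linear_map_sum L : linear_map L -> forall m (F : 'I_m -> 'M[C]_d),
  L (\sum_(k < m) F k) = \sum_(k < m) L (F k).
Proof.
by move=> L_lin m F; apply: (big_morph _ (linear_mapD L_lin) (linear_map0 L_lin)).
Qed.

Lemma linear_map_sandwich_sum m (M : 'I_m -> 'M[C]_d)
    (Phi : 'I_m -> 'M[C]_d -> 'M[C]_d) :
  (forall i, linear_map (Phi i)) ->
  linear_map (fun X => \sum_i Phi i (M i *m X *m dag (M i))).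
Proof.
move=> Phi_lin c A B; rewrite scaler_sumr -big_split /=; apply: eq_bigr => i _.
by rewrite mulmxDr mulmxDl -scalemxAr -scalemxAl Phi_lin.
Qed.

Lemma linear_map_density_ext L K : linear_map L -> linear_map K ->
  (forall rho, density rho -> L rho = K rho) -> L =1 K.
Proof.
move=> L_lin K_lin LK.
have LK_proj (v : 'cV[C]_d) : L (proj v) = K (proj v).
  have [v0|v_neq0] := eqVneq v 0.
    by rewrite v0 /proj mul0mx (linear_map0 L_lin) (linear_map0 K_lin).
  have v_neq0' : sqnorm v != 0 by rewrite sqnorm_eq0.
  have -> : proj v = sqnorm v *: ((sqnorm v)^-1 *: proj v).
    by rewrite scalerA divff // scale1r.
  rewrite (linear_mapZ L_lin) (linear_mapZ K_lin) LK //; split.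
    by apply: psd_scale_proj; rewrite invr_ge0 sqnorm_ge0.
  by rewrite mxtraceZ mxtrace_proj mulVf.
have LK_outer (u v : 'cV[C]_d) : L (u *m dag v) = K (u *m dag v).
  have two_neq0 : (2%:R : C) != 0 by rewrite pnatr_eq0.
  rewrite -[u *m dag v]scale1r -(mulVf two_neq0) -scalerA proj_polarization.
  by rewrite !(linear_mapD L_lin, linear_mapN L_lin, linear_mapZ L_lin)
             !(linear_mapD K_lin, linear_mapN K_lin, linear_mapZ K_lin) !LK_proj.
move=> X; rewrite [X]matrix_sum_delta !(linear_map_sum L_lin, linear_map_sum K_lin).
apply: eq_bigr => a _; rewrite !(linear_map_sum L_lin, linear_map_sum K_lin).
apply: eq_bigr => b _; rewrite (linear_mapZ L_lin) (linear_mapZ K_lin).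
by rewrite -(mul_delta_mx (0 : 'I_1)) -dag_delta LK_outer.
Qed.

End LinearMaps.

Section Amplification.
Variables d n : nat.
Implicit Types (X : 'M[C]_(d * n)) (L : 'M[C]_d -> 'M[C]_d).

Lemma ampl_id X : ampl id X = X.
Proof. by apply/blkP => a b; rewrite blk_ampl. Qed.

Lemma amplZ L c X : linear_map L -> ampl L (c *: X) = c *: ampl L X.
Proof.
by move=> L_lin; apply/blkP => a b; rewrite blkZ !blk_ampl blkZ (linear_mapZ L_lin).
Qed.

Lemma mxtrace_ampl L X : trace_preserving L -> \tr (ampl L X) = \tr X.
Proof.
by move=> L_tp; rewrite !mxtrace_blk; apply: eq_bigr => a _; rewrite blk_ampl L_tp.
Qed.

Lemma density_ampl L X : CPT L -> density X -> density (ampl L X).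
Proof.
by case=> _ L_cp L_tp [X_psd X_tr]; split; [apply: L_cp | rewrite mxtrace_ampl].
Qed.

Lemma blk_proj_tens1 a b (M : 'M[C]_d) (v : 'cV[C]_(d * n)) :
  blk a b (proj ((M *t (1%:M : 'M_n)) *m v)) = M *m blk a b (proj v) *m dag M.
Proof.
rewrite /proj dagM dag_tens dag1 !mulmxA blk_mulmx_tens1.
by rewrite -!mulmxA blk_tens1_mull mulmxA.
Qed.

End Amplification.

Section Choi.
Variable d : nat.
Implicit Types L : 'M[C]_d -> 'M[C]_d.

Lemma phiplusE (k a : 'I_d) :
  phiplus R d (mxtens_index (k, a)) 0 = (Num.sqrt (d%:R : R))^-1%:C * (k == a)%:R.
Proof.
rewrite mxE summxE; congr (_ * _).
rewrite (bigD1 k) //= big1 ?addr0 => [|j /negPf jk].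
  by rewrite !mxE !mxtens_indexK /= eqxx /= [Ordinal _]ord1 eqxx mul1r andbT eq_sym.
by rewrite !mxE !mxtens_indexK /= [k == j]eq_sym jk mul0r.
Qed.

Lemma phiplus_unit : (0 < d)%N -> dag (phiplus R d) *m phiplus R d = 1.
Proof.
move=> d_gt0; rewrite [LHS]mx11_scalar -/(sqnorm _) sqnormE sum_mxtens_index.
set s := (Num.sqrt (d%:R : R))^-1%:C.
have row_sum (k : 'I_d) : \sum_(a < d) conjc (phiplus R d (mxtens_index (k, a)) 0)
    * phiplus R d (mxtens_index (k, a)) 0 = s * s.
  rewrite (bigD1 k) //= big1 ?addr0 => [|a /negPf ak]; rewrite !phiplusE.
    by rewrite eqxx mulr1 /s conjcR.
  by rewrite eq_sym ak mulr0 rmorph0 mul0r.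
under eq_bigr do rewrite row_sum.
rewrite sumr_const card_ord -mulr_natl /s -rmorphM.
rewrite -(rmorph_nat (real_complex R)) -rmorphM /= -expr2 exprVn sqr_sqrtr ?ler0n //.
by rewrite mulfV // pnatr_eq0 -lt0n.
Qed.

Lemma density_choi L : (0 < d)%N -> CPT L -> density (choi L).
Proof.
by move=> d_gt0 L_cpt; apply: density_ampl; last exact/density_proj/phiplus_unit.
Qed.

Lemma choi_sandwich_sum L m (M : 'I_m -> 'M[C]_d)
    (Phi : 'I_m -> 'M[C]_d -> 'M[C]_d) :
  L =1 (fun X => \sum_i Phi i (M i *m X *m dag (M i))) ->
  choi L = \sum_i ampl (Phi i) (proj ((M i *t 1%:M) *m phiplus R d)).
Proof.
move=> LE; apply/blkP => a b; rewrite blk_ampl LE blk_sum.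
by apply: eq_bigr => i _; rewrite blk_ampl blk_proj_tens1.
Qed.

Lemma classical_memory_choi E1 E2 : CPT E1 -> CPT E2 -> classical_memory E1 E2 ->
  exists m (w : 'I_m -> 'cV[C]_(d * d)) (Phi : 'I_m -> 'M[C]_d -> 'M[C]_d),
  [/\ forall i, CPT (Phi i), choi E1 = \sum_i proj (w i)
    & choi E2 = \sum_i ampl (Phi i) (proj (w i))].
Proof.
move=> [E1_lin _ _] [E2_lin _ _] [m [M [Phi [E1_kraus Phi_cpt E2_mem]]]].
have Phi_lin i : linear_map (Phi i) by case: (Phi_cpt i).
have E1E : E1 =1 (fun X => \sum_i M i *m X *m dag (M i)).
  apply: linear_map_density_ext E1_lin _ E1_kraus.
  exact: (linear_map_sandwich_sum (Phi := fun _ => id) M (fun _ _ _ _ => erefl)).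
have E2E : E2 =1 (fun X => \sum_i Phi i (M i *m X *m dag (M i))).
  exact: linear_map_density_ext E2_lin (linear_map_sandwich_sum M Phi_lin) E2_mem.
exists m, (fun i => (M i *t 1%:M) *m phiplus R d), Phi; split=> //.
  rewrite (choi_sandwich_sum (Phi := fun _ => id) E1E).
  by under eq_bigr do rewrite ampl_id.
exact: choi_sandwich_sum E2E.
Qed.

End Choi.

(* [u] is only used for [w = 0], where the weight vanishes. *)
Lemma proj_normalize N (u w : 'cV[C]_N) : dag u *m u = 1 ->
  exists psi, dag psi *m psi = 1 /\ proj w = (complex.Re (sqnorm w))%:C *: proj psi.
Proof.
move=> u_unit; set p := complex.Re (sqnorm w).
have pE : p%:C = sqnorm w by apply/ge0_ReK/sqnorm_ge0.
have [p0|p_neq0] := eqVneq p 0.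
  exists u; split=> //; have /eqP : sqnorm w = 0 by rewrite -pE p0.
  by rewrite sqnorm_eq0 => /eqP->; rewrite p0 scale0r /proj mul0mx.
have p_ge0 : 0 <= p by rewrite -ler0c pE sqnorm_ge0.
set c := (Num.sqrt p)^-1%:C.
have cc : conjc c * c = p^-1%:C by rewrite /c conjcR -rmorphM -expr2 exprVn sqr_sqrtr.
exists (c *: w); split.
  rewrite dagZ -scalemxAl -scalemxAr scalerA cc [dag w *m w]mx11_scalar -/(sqnorm w).
  by rewrite -pE scale_scalar_mx -rmorphM mulVf // rmorph1.
have -> : proj (c *: w) = (conjc c * c) *: proj w.
  by rewrite /proj dagZ -scalemxAl -scalemxAr scalerA mulrC.
by rewrite cc scalerA -rmorphM mulfV // scale1r.
Qed.

Lemma pure_decomp_sum_proj N m (u : 'cV[C]_N) (w : 'I_m -> 'cV[C]_N) :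
  dag u *m u = 1 -> \tr (\sum_i proj (w i)) = 1 ->
  exists psi, pure_decomp (\sum_i proj (w i)) (fun i => complex.Re (sqnorm (w i))) psi
    /\ forall i, proj (w i) = (complex.Re (sqnorm (w i)))%:C *: proj (psi i).
Proof.
move=> u_unit tr1.
have /boolp.choice[psi psiP] := fun i => proj_normalize (w i) u_unit.
exists psi; split=> [|i]; last by case: (psiP i).
split=> [i|||].
- exact/Re_ge0/sqnorm_ge0.
- apply: complexI; rewrite rmorph_sum rmorph1 -tr1 raddf_sum.
  by apply: eq_bigr => i _ /=; rewrite mxtrace_proj; apply/ge0_ReK/sqnorm_ge0.
- by move=> i; case: (psiP i).
- by apply: eq_bigr => i _; case: (psiP i).
Qed.

Lemma pure_decomp_mix N (E : 'M[C]_N -> R) m (p : 'I_m -> R) (S : 'I_m -> 'M[C]_N)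
    (n : 'I_m -> nat) (q : forall i, 'I_(n i) -> R)
    (psi : forall i, 'I_(n i) -> 'cV[C]_N) :
  (forall i, 0 <= p i) -> \sum_i p i = 1 ->
  (forall i, pure_decomp (S i) (q i) (psi i)) ->
  exists n' (q' : 'I_n' -> R) psi', pure_decomp (\sum_i (p i)%:C *: S i) q' psi' /\
    decomp_value E q' psi' = \sum_i p i * decomp_value E (q i) (psi i).
Proof.
move=> p_ge0 p_sum1 S_dec; pose T := {i : 'I_m & 'I_(n i)}.
have sumT (V : nmodType) (G : T -> V) :
    \sum_(k < #|{: T}|) G (enum_val k) = \sum_i \sum_(j < n i) G (Tagged _ j).
  rewrite -(big_enum_val (A := predT)) /=.
  rewrite (sig_big_dep xpredT (fun _ _ => true)
    (fun i (j : 'I_(n i)) => G (Tagged _ j))) /=.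
  by apply: eq_bigr => -[i j].
exists #|{: T}|, (fun k => p (tag (enum_val k)) * q _ (tagged (enum_val k))),
  (fun k => psi _ (tagged (enum_val k))); split; last first.
  rewrite /decomp_value
    (sumT _ (fun x => p (tag x) * q _ (tagged x) * E (proj (psi _ (tagged x))))).
  by apply: eq_bigr => i _; rewrite mulr_sumr; apply: eq_bigr => j _; rewrite mulrA.
split=> [k||k|].
- by case: (S_dec (tag (enum_val k))) => q_ge0 _ _ _; rewrite mulr_ge0.
- rewrite (sumT _ (fun x => p (tag x) * q _ (tagged x))) -[RHS]p_sum1.
  apply: eq_bigr => i _ /=; case: (S_dec i) => _ q_sum1 _ _.
  by rewrite -mulr_sumr q_sum1 mulr1.
- by case: (S_dec (tag (enum_val k))).
rewrite (sumT _ (fun x => (p (tag x) * q _ (tagged x))%:C *: proj (psi _ (tagged x)))).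
apply: eq_bigr => i _ /=; case: (S_dec i) => _ _ _ ->; rewrite scaler_sumr.
by apply: eq_bigr => j _; rewrite scalerA rmorphM.
Qed.

Lemma convex_roof_mix_le N (E : 'M[C]_N -> R) m (p : 'I_m -> R) (S : 'I_m -> 'M[C]_N) :
  convex_roof E -> (forall i, 0 <= p i) -> \sum_i p i = 1 -> (forall i, density (S i)) ->
  E (\sum_i (p i)%:C *: S i) <= \sum_i p i * E (S i).
Proof.
move=> E_roof p_ge0 p_sum1 S_dens.
have /boolp.choice[x xP] : forall i,
    exists x : {n : nat & (('I_n -> R) * ('I_n -> 'cV[C]_N))%type},
    pure_decomp (S i) (tagged x).1 (tagged x).2 /\
    E (S i) = decomp_value E (tagged x).1 (tagged x).2.
  move=> i; have [_ [n [q [psi [S_dec S_val]]]]] := E_roof _ (S_dens i).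
  by exists (Tagged (fun n => (('I_n -> R) * ('I_n -> 'cV[C]_N))%type) (q, psi)).
have [n' [q' [psi' [mix_dec mix_val]]]] := pure_decomp_mix E p_ge0 p_sum1
  (n := fun i => tag (x i)) (fun i => (xP i).1).
have [roof_le _] := E_roof _ (density_mix p_ge0 p_sum1 S_dens).
suff -> : \sum_i p i * E (S i) = decomp_value E q' psi' by apply: roof_le.
by rewrite mix_val; apply: eq_bigr => i _; rewrite (xP i).2.
Qed.

Lemma convex_roof_local_mix_le d (E : 'M[C]_(d * d) -> R) m
    (Phi : 'I_m -> 'M[C]_d -> 'M[C]_d) rho p (psi : 'I_m -> 'cV[C]_(d * d)) :
  convex_roof E -> local_monotone E -> (forall i, CPT (Phi i)) ->
  pure_decomp rho p psi ->
  E (\sum_i (p i)%:C *: ampl (Phi i) (proj (psi i))) <= decomp_value E p psi.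
Proof.
move=> E_roof E_mono Phi_cpt [p_ge0 p_sum1 psi_unit _].
have psi_dens i : density (proj (psi i)) := density_proj (psi_unit i).
apply: le_trans (convex_roof_mix_le E_roof p_ge0 p_sum1
  (fun i => density_ampl (Phi_cpt i) (psi_dens i))) _.
by apply: ler_sum => i _; rewrite ler_wpM2l // E_mono.
Qed.

End Quantum.

Theorem theorem1 (R : realType) (d : nat) (d_gt0 : (0 < d)%N)
  (E : 'M[R[i]]_(d * d) -> R)
  (E_roof : convex_roof E) (E_mono : local_monotone E)
  (E1 E2 : 'M[R[i]]_d -> 'M[R[i]]_d) :
  CPT E1 -> CPT E2 ->
  (Esharp E (choi E1) < (E (choi E2))%:E)%E ->
  ~ classical_memory E1 E2.
Proof.
move=> E1_cpt E2_cpt lt_E /(classical_memory_choi E1_cpt E2_cpt).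
move=> [m [w [Phi [Phi_cpt chi1E chi2E]]]].
have tr1 : \tr (\sum_i proj (w i)) = 1.
  by rewrite -chi1E; case: (density_choi d_gt0 E1_cpt).
have [psi [chi1_dec wE]] := pure_decomp_sum_proj (phiplus_unit R d_gt0) tr1.
rewrite -chi1E in chi1_dec.
set p := fun i => complex.Re _ in chi1_dec wE.
have chi2E' : choi E2 = \sum_i (p i)%:C *: ampl (Phi i) (proj (psi i)).
  rewrite chi2E; apply: eq_bigr => i _; rewrite wE amplZ //.
  by case: (Phi_cpt i).
have : ((E (choi E2))%:E <= Esharp E (choi E1))%E.
  apply: le_trans (ereal_sup_ubound _); last by exists m, p, psi.
  by rewrite lee_fin chi2E' (convex_roof_local_mix_le E_roof E_mono Phi_cpt chi1_dec).
by rewrite leNgt lt_E.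
Qed.
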